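(* Let $d\ge 2$, let $K$ be a hemisphere of $S^d$ and let $p\in \mathrm{bd}(K)$. Let $pq\subset K$ be an arc orthogonal to $\mathrm{bd}(K)$ at $p$, with $q$ in the interior of $K$ and $|pq|<\frac{\pi}{2}$. Consider all lunes of the form $K\cap M$, where $M$ is a hemisphere with $q\in\mathrm{bd}(M)$ and $p\in M$ (so that $pq\subset K\cap M$). Let $K_\perp$ be the hemisphere with $q\in \mathrm{bd}(K_\perp)$ and $p\in K_\perp$ such that $pq$ is orthogonal to $\mathrm{bd}(K_\perp)$ at $q$. Then among all these lunes, $K\cap K_\perp$ has the smallest thickness.
   Context: $S^d$ is the unit sphere in $E^{d+1}$. For non-antipodal points $a,b$, the arc $ab$ is the shorter great-circle arc joining them and $|ab|$ is its length (the spherical distance). A hemisphere is the intersection of $S^d$ with a closed half-space of $E^{d+1}$ whose boundary hyperplane passes through the origin; its center is the point of the hemisphere at distance $\frac{\pi}{2}$ from its boundary. If hemispheres $G,H$ are different and not opposite (opposite means their centers are antipodal), $L=G\cap H$ is a lune; $G/H$ and $H/G$ denote the parts of $\mathrm{bd}(G)$ and $\mathrm{bd}(H)$ contained in $G\cap H$ (these are $(d-1)$-dimensional hemispheres, i.e., sets of points of a $(d-1)$-dimensional great sphere at distance at most $\frac{\pi}{2}$ from a point, called the center). The thickness $\Delta(L)$ of the lune is the spherical distance between the centers of $G/H$ and $H/G$. *)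

(* classical reals. Points of E^{d+1} are represented as
   functions nat -> R; only coordinates 0..d are relevant (every notion
   below only inspects those coordinates). *)
From Stdlib Require Import Reals.
Open Scope R_scope.

Definition vec := nat -> R.

Definition dot (d : nat) (x y : vec) : R := sum_f_R0 (fun i => x i * y i) d.

Definition veq (d : nat) (x y : vec) : Prop := forall i, (i <= d)%nat -> x i = y i.

Definition on_sphere (d : nat) (x : vec) : Prop := dot d x x = 1.

Definition sdist (d : nat) (a b : vec) : R := acos (dot d a b).

(* The closed hemisphere with center c (c a unit vector):
   S^d intersected with the closed half-space {x | <c,x> >= 0}. *)
Definition hemi (d : nat) (c : vec) (x : vec) : Prop := on_sphere d x /\ 0 <= dot d c x.
Definition bd_hemi (d : nat) (c : vec) (x : vec) : Prop := on_sphere d x /\ dot d c x = 0.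
Definition int_hemi (d : nat) (c : vec) (x : vec) : Prop := on_sphere d x /\ 0 < dot d c x.

Definition arc (d : nat) (a b : vec) (x : vec) : Prop :=
  on_sphere d x /\ exists l m : R, 0 <= l /\ 0 <= m /\
     veq d x (fun i => l * a i + m * b i).

(* The arc ab is orthogonal at a to the great sphere bd(hemi n) (with a on it):
   the tangent vector of the arc at a, namely b - <a,b> a, is orthogonal to
   every tangent vector of the great sphere bd(hemi n) at a. *)
Definition arc_orth_at (d : nat) (a b n : vec) : Prop :=
  forall v : vec, dot d v n = 0 -> dot d v a = 0 ->
    dot d (fun i => b i - dot d a b * a i) v = 0.

(* Hemispheres G = hemi g, H = hemi h are different and not opposite,
   so that G ∩ H is a lune. *)
Definition is_lune (d : nat) (g h : vec) : Prop :=
  on_sphere d g /\ on_sphere d h /\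
  ~ (forall x, hemi d g x <-> hemi d h x) /\
  ~ veq d h (fun i => - g i).

Definition half_bd (d : nat) (g h : vec) (x : vec) : Prop := bd_hemi d g x /\ 0 <= dot d h x.

(* c is the center of the (d-1)-dimensional hemisphere G/H: c lies on the
   great sphere bd(G), and G/H is exactly the set of points of bd(G) at
   spherical distance at most pi/2 from c. *)
Definition is_center_half (d : nat) (g h c : vec) : Prop :=
  bd_hemi d g c /\
  forall x, bd_hemi d g x -> (half_bd d g h x <-> sdist d x c <= PI / 2).

Definition thickness_is (d : nat) (g h : vec) (t : R) : Prop :=
  exists c1 c2, is_center_half d g h c1 /\ is_center_half d h g c2 /\
    t = sdist d c1 c2.

From Stdlib Require Import Reals Lra Psatz.
Open Scope R_scope.

(* Orthogonality of pq to bd(K) at p puts q in the plane of p and the center k of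
   K: q = cos|pq| p + sin|pq| k. Symmetrically p = cos|pq| q + sin|pq| k_perp, which
   gives <k, k_perp> = -cos|pq|. The thickness of a lune G ∩ H is acos(-<g,h>),
   the centers of G/H and H/G being the normalized components of h orthogonal to g
   and of g orthogonal to h. For an admissible M, <q,m> = 0 and
   <p,m> = sin|pq| <k_perp,m> <= sin|pq| then give -<k,m> <= cos|pq|. *)

Section Dot.
Variable d : nat.

Lemma dot_comm x y : dot d x y = dot d y x.
Proof. unfold dot; induction d as [|n IH]; simpl; [ring | rewrite IH; ring]. Qed.

Lemma dot_veq_l x y z : veq d x y -> dot d x z = dot d y z.
Proof.
  unfold veq, dot; induction d as [|n IH]; intros E; simpl.
  - rewrite E; auto.
  - rewrite IH by (intros; apply E; lia). rewrite (E (S n)) by lia. ring.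
Qed.

Lemma dot_lin2l a b x y w :
  dot d (fun i => a * x i + b * y i) w = a * dot d x w + b * dot d y w.
Proof. unfold dot; induction d as [|n IH]; simpl; [ring | rewrite IH; ring]. Qed.

Lemma dot_lin2r a b x y w :
  dot d w (fun i => a * x i + b * y i) = a * dot d w x + b * dot d w y.
Proof. rewrite dot_comm, dot_lin2l, (dot_comm x), (dot_comm y); ring. Qed.

Lemma dot_lin3l a b e x y z w :
  dot d (fun i => a * x i + b * y i + e * z i) w
  = a * dot d x w + b * dot d y w + e * dot d z w.
Proof. unfold dot; induction d as [|n IH]; simpl; [ring | rewrite IH; ring]. Qed.

Lemma dot_self_ge0 x : 0 <= dot d x x.
Proof. apply cond_pos_sum; intros; nra. Qed.

Lemma dot_self_eq0 x : dot d x x = 0 -> veq d x (fun _ => 0).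
Proof.
  unfold veq, dot; induction d as [|n IH]; simpl; intros H i Hi.
  - assert (i = 0%nat) by lia; subst; nra.
  - assert (N : 0 <= sum_f_R0 (fun i => x i * x i) n)
      by (apply cond_pos_sum; intros; nra).
    assert (x (S n) = 0) by nra.
    destruct (Nat.eq_dec i (S n)); [subst; auto |].
    apply IH; [nra | lia].
Qed.

Lemma unit_dot_bound x y : on_sphere d x -> on_sphere d y -> -1 <= dot d x y <= 1.
Proof.
  unfold on_sphere; intros Hx Hy.
  pose proof (dot_self_ge0 (fun i => 1 * x i + (-1) * y i)) as Nm.
  pose proof (dot_self_ge0 (fun i => 1 * x i + 1 * y i)) as Np.
  rewrite dot_lin2l, !dot_lin2r, (dot_comm y) in Nm, Np. lra.
Qed.

Lemma unit_dot_eq1 x y : on_sphere d x -> on_sphere d y -> dot d x y = 1 -> veq d x y.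
Proof.
  unfold on_sphere; intros Hx Hy E i Hi.
  assert (Z : dot d (fun i => 1 * x i + (-1) * y i) (fun i => 1 * x i + (-1) * y i) = 0)
    by (rewrite dot_lin2l, !dot_lin2r, (dot_comm y); lra).
  pose proof (dot_self_eq0 _ Z i Hi); simpl in *; lra.
Qed.

Lemma unit_dot_eqN1 x y :
  on_sphere d x -> on_sphere d y -> dot d x y = -1 -> veq d y (fun i => - x i).
Proof.
  unfold on_sphere; intros Hx Hy E i Hi.
  assert (Z : dot d (fun i => 1 * x i + 1 * y i) (fun i => 1 * x i + 1 * y i) = 0)
    by (rewrite dot_lin2l, !dot_lin2r, (dot_comm y); lra).
  pose proof (dot_self_eq0 _ Z i Hi); simpl in *; lra.
Qed.

Lemma unit_separating_point g h :
  on_sphere d g -> on_sphere d h -> dot d g h < 1 ->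
  exists x, on_sphere d x /\ 0 < dot d g x /\ dot d h x < 0 /\
    (forall w, dot d w g = 0 -> dot d w h = 0 -> dot d w x = 0).
Proof.
  unfold on_sphere; intros Hg Hh Hlt.
  set (n := sqrt (2 - 2 * dot d g h)).
  assert (Np : 0 < n) by (apply sqrt_lt_R0; lra).
  assert (Nn : n * n = 2 - 2 * dot d g h) by (apply sqrt_sqrt; lra).
  exists (fun i => / n * g i + (- / n) * h i).
  repeat split.
  - unfold on_sphere; rewrite dot_lin2l, !dot_lin2r, Hg, Hh, (dot_comm h).
    apply Rmult_eq_reg_r with (n * n); [field_simplify; lra | nra].
  - rewrite dot_lin2r, Hg.
    apply Rmult_lt_reg_r with n; [lra |]. field_simplify; lra.
  - rewrite dot_lin2r, Hh, (dot_comm h).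
    apply Rmult_lt_reg_r with n; [lra |]. field_simplify; lra.
  - intros w Wg Wh; rewrite dot_lin2r, Wg, Wh; ring.
Qed.

End Dot.

Lemma acos_le_acos_iff x y :
  -1 <= x <= 1 -> -1 <= y <= 1 -> (acos x <= acos y <-> y <= x).
Proof.
  intros Hx Hy. pose proof (acos_bound x) as Bx; pose proof (acos_bound y) as By.
  split; intros H.
  - destruct (Rle_lt_dec y x) as [| Hlt]; auto.
    rewrite <- (cos_acos x), <- (cos_acos y) in Hlt by auto.
    apply cos_decreasing_0 in Hlt; lra.
  - destruct (Rle_lt_dec (acos x) (acos y)) as [| Hlt]; auto.
    apply cos_decreasing_1 in Hlt; try lra.
    rewrite !cos_acos in Hlt by auto. lra.
Qed.

Lemma acos_le_PI2_iff x : -1 <= x <= 1 -> (acos x <= PI / 2 <-> 0 <= x).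
Proof. intros. rewrite <- acos_0. apply acos_le_acos_iff; lra. Qed.

Lemma acos_lt_PI2 x : -1 <= x <= 1 -> acos x < PI / 2 -> 0 < x.
Proof.
  intros Hx Hlt. destruct (Rle_lt_dec x 0) as [Hle |]; auto.
  rewrite <- acos_0 in Hlt.
  apply (acos_le_acos_iff 0 x) in Hle; lra.
Qed.

Section Lune.
Variable d : nat.

Definition half_center (g h : vec) : vec :=
  let s := sqrt (1 - dot d g h ^ 2) in
  fun i => / s * h i + (- (dot d g h / s)) * g i.

Lemma half_center_spec g h :
  on_sphere d g -> on_sphere d h -> -1 < dot d g h < 1 ->
  is_center_half d g h (half_center g h).
Proof.
  unfold on_sphere; intros Hg Hh Hm.
  set (s := sqrt (1 - dot d g h ^ 2)).
  assert (Sp : 0 < s) by (apply sqrt_lt_R0; nra).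
  assert (Ss : s * s = 1 - dot d g h ^ 2) by (apply sqrt_sqrt; nra).
  assert (Hb : bd_hemi d g (half_center g h)).
  { unfold bd_hemi, on_sphere, half_center; fold s. split.
    - rewrite dot_lin2l, !dot_lin2r, (dot_comm d h g), Hg, Hh.
      apply Rmult_eq_reg_r with (s * s); [field_simplify; nra | nra].
    - rewrite dot_lin2r, Hg. field. lra. }
  split; auto. intros x [Ux Gx]. unfold half_bd, sdist.
  rewrite acos_le_PI2_iff by (apply unit_dot_bound; auto; apply Hb).
  assert (Cx : dot d x (half_center g h) = dot d h x / s).
  { unfold half_center; fold s.
    rewrite dot_lin2r, (dot_comm d x g), Gx, (dot_comm d x h). field. lra. }
  rewrite Cx. split.
  - intros [_ H]. unfold Rdiv; apply Rle_mult_inv_pos; lra.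
  - intros H. split; [split; auto |].
    destruct (Rle_lt_dec 0 (dot d h x)); auto.
    assert (dot d h x / s < 0) by (apply Rdiv_neg_pos; lra). lra.
Qed.

(* Two centers of G/H both lie on bd(G); a point of bd(G) on the far side of one
   and the near side of the other would violate the characterization. *)
Lemma half_center_unique g h c :
  on_sphere d g -> on_sphere d h -> -1 < dot d g h < 1 ->
  is_center_half d g h c -> veq d c (half_center g h).
Proof.
  intros Hg Hh Hm [[Uc Gc] Pc].
  destruct (half_center_spec g h Hg Hh Hm) as [[Ue Ge] Pe].
  apply unit_dot_eq1; auto.
  apply Rle_antisym; [apply unit_dot_bound; auto |].
  destruct (Rle_lt_dec 1 (dot d c (half_center g h))) as [| Hlt]; auto.
  destruct (unit_separating_point d _ _ Uc Ue Hlt) as (x & Ux & Xc & Xe & Xw).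
  assert (Bx : bd_hemi d g x) by (split; auto).
  specialize (Pc x Bx); specialize (Pe x Bx); unfold sdist in Pc, Pe.
  rewrite acos_le_PI2_iff in Pc, Pe by (apply unit_dot_bound; auto).
  rewrite (dot_comm d x) in Pc, Pe.
  assert (0 <= dot d (half_center g h) x) by (apply Pe, Pc; lra). lra.
Qed.

Lemma dot_half_centers g h :
  on_sphere d g -> on_sphere d h -> -1 < dot d g h < 1 ->
  dot d (half_center g h) (half_center h g) = - dot d g h.
Proof.
  unfold on_sphere, half_center; intros Hg Hh Hm.
  rewrite (dot_comm d h g).
  set (s := sqrt (1 - dot d g h ^ 2)).
  assert (Sp : 0 < s) by (apply sqrt_lt_R0; nra).
  assert (Ss : s * s = 1 - dot d g h ^ 2) by (apply sqrt_sqrt; nra).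
  rewrite dot_lin2l, !dot_lin2r, Hg, Hh, (dot_comm d h g).
  apply Rmult_eq_reg_r with (s * s); [field_simplify; nra | nra].
Qed.

Lemma is_lune_iff g h :
  is_lune d g h <-> on_sphere d g /\ on_sphere d h /\ -1 < dot d g h < 1.
Proof.
  split.
  - intros (Hg & Hh & Nsame & Nopp). do 2 (split; auto).
    pose proof (unit_dot_bound d g h Hg Hh).
    destruct (Req_dec (dot d g h) 1) as [E |].
    { contradict Nsame; intros x; unfold hemi.
      rewrite (dot_veq_l d g h x (unit_dot_eq1 d g h Hg Hh E)). tauto. }
    destruct (Req_dec (dot d g h) (-1)) as [E |].
    { contradict Nopp; apply unit_dot_eqN1; auto. }
    lra.
  - intros (Hg & Hh & Hm). do 2 (split; auto). split.
    + destruct (unit_separating_point d g h Hg Hh (proj2 Hm)) as (x & Ux & Gx & Hx & _).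
      intros Same. destruct (proj1 (Same x)) as [_ Hx']; [split; auto; lra | lra].
    + intros Opp. rewrite (dot_comm d g), (dot_veq_l d _ _ g Opp) in Hm.
      rewrite (dot_veq_l d _ (fun i => (-1) * g i + 0 * g i)), dot_lin2l in Hm
        by (intros i _; ring).
      unfold on_sphere in Hg; lra.
Qed.

Lemma thickness_is_iff g h t :
  is_lune d g h -> (thickness_is d g h t <-> t = acos (- dot d g h)).
Proof.
  rewrite is_lune_iff; intros (Hg & Hh & Hm).
  assert (Hm' : -1 < dot d h g < 1) by (rewrite dot_comm; auto).
  rewrite <- (dot_half_centers g h) by auto. split.
  - intros (c1 & c2 & C1 & C2 & ->). unfold sdist.
    rewrite (dot_veq_l d _ _ _ (half_center_unique g h c1 Hg Hh Hm C1)),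
      dot_comm, (dot_veq_l d _ _ _ (half_center_unique h g c2 Hh Hg Hm' C2)),
      dot_comm.
    reflexivity.
  - intros ->. exists (half_center g h), (half_center h g).
    split; [apply half_center_spec; auto |].
    split; [apply half_center_spec; auto | reflexivity].
Qed.

End Lune.

Section OrthogonalArc.
Variable d : nat.

(* The residual r = b - <a,b> a - <n,b> n is orthogonal to a and n, hence to the
   tangent vector b - <a,b> a of the arc; then |r|^2 = <b - <a,b> a, r> = 0. *)
Lemma arc_orth_at_span a b n :
  on_sphere d n -> on_sphere d a -> dot d n a = 0 -> arc_orth_at d a b n ->
  veq d b (fun i => dot d a b * a i + dot d n b * n i).
Proof.
  unfold on_sphere; intros Hn Ha Na Orth.
  set (r := fun i => 1 * b i + (- dot d a b) * a i + (- dot d n b) * n i).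
  assert (Rn : dot d r n = 0).
  { unfold r; rewrite dot_lin3l, Hn, (dot_comm d a n), Na, (dot_comm d b n); ring. }
  assert (Ra : dot d r a = 0).
  { unfold r; rewrite dot_lin3l, Ha, Na, (dot_comm d b a); ring. }
  assert (Rb : dot d b r = 0).
  { specialize (Orth r Rn Ra).
    rewrite (dot_veq_l d _ (fun i => 1 * b i + (- dot d a b) * a i)),
      dot_lin2l, (dot_comm d a r), Ra in Orth by (intros i _; ring).
    lra. }
  assert (Rr : dot d r r = 0).
  { unfold r at 1; rewrite dot_lin3l, Rb, (dot_comm d a r), Ra, (dot_comm d n r), Rn; ring. }
  intros i Hi. pose proof (dot_self_eq0 d r Rr i Hi) as Ri. unfold r in Ri. lra.
Qed.

Lemma arc_orth_at_dot a b n w :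
  on_sphere d n -> on_sphere d a -> dot d n a = 0 -> arc_orth_at d a b n ->
  dot d b w = dot d a b * dot d a w + dot d n b * dot d n w.
Proof.
  intros Hn Ha Na Orth.
  rewrite (dot_veq_l d _ _ _ (arc_orth_at_span a b n Hn Ha Na Orth)).
  apply dot_lin2l.
Qed.

Lemma arc_orth_at_sq a b n :
  on_sphere d n -> on_sphere d a -> dot d n a = 0 -> on_sphere d b ->
  arc_orth_at d a b n -> dot d a b ^ 2 + dot d n b ^ 2 = 1.
Proof.
  intros Hn Ha Na Hb Orth. unfold on_sphere in Hb.
  rewrite (arc_orth_at_dot a b n b) in Hb by auto.
  rewrite <- Hb; ring.
Qed.

End OrthogonalArc.

Section PerpendicularLune.
Variables (d : nat) (k p q kperp : vec).
Hypotheses (Hk : on_sphere d k) (Hp : bd_hemi d k p) (Hq : int_hemi d k q)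
  (Opq : arc_orth_at d p q k).
Hypotheses (Hkperp : on_sphere d kperp) (Kq : bd_hemi d kperp q) (Kp : hemi d kperp p)
  (Oqp : arc_orth_at d q p kperp).

Lemma dot_kperp_p : dot d kperp p = dot d k q.
Proof.
  destruct Hp as [Up Kp0], Hq as [Uq Kq0], Kq as [_ Kq1], Kp as [_ Kp1].
  pose proof (arc_orth_at_sq d p q k Hk Up Kp0 Uq Opq).
  pose proof (arc_orth_at_sq d q p kperp Hkperp Uq Kq1 Up Oqp).
  rewrite (dot_comm d q p) in *. nra.
Qed.

Lemma dot_p_q_lt1 : dot d p q < 1.
Proof.
  destruct Hp as [Up Kp0], Hq as [Uq Kq0].
  pose proof (arc_orth_at_sq d p q k Hk Up Kp0 Uq Opq). nra.
Qed.

Lemma dot_k_kperp : dot d k kperp = - dot d p q.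
Proof.
  destruct Hp as [Up Kp0], Hq as [Uq Kq0], Kq as [_ Kq1].
  pose proof (arc_orth_at_dot d q p kperp k Hkperp Uq Kq1 Oqp) as E.
  rewrite (dot_comm d p k), Kp0, (dot_comm d q k), (dot_comm d q p),
    (dot_comm d kperp k), dot_kperp_p in E.
  apply Rmult_eq_reg_l with (dot d k q); nra.
Qed.

Lemma opp_dot_k_le m :
  0 < dot d p q -> on_sphere d m -> bd_hemi d m q -> hemi d m p ->
  - dot d k m <= dot d p q.
Proof.
  intros Hpq Hm [_ Mq] [_ Mp].
  destruct Hp as [Up Kp0], Hq as [Uq Kq0], Kq as [_ Kq1], Kp as [_ Kp1].
  pose proof (arc_orth_at_dot d q p kperp m Hkperp Uq Kq1 Oqp) as Ep.
  pose proof (arc_orth_at_dot d p q k m Hk Up Kp0 Opq) as Eq.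
  rewrite (dot_comm d q m), Mq, dot_kperp_p in Ep. rewrite (dot_comm d q m), Mq in Eq.
  rewrite (dot_comm d p m) in Ep, Eq.
  assert (dot d m p <= dot d k q)
    by (pose proof (unit_dot_bound d kperp m Hkperp Hm); nra).
  apply Rmult_le_reg_l with (dot d k q); nra.
Qed.

End PerpendicularLune.

Theorem mainTheorem1 (d : nat) (k p q kperp : vec) :
  (2 <= d)%nat ->
  on_sphere d k ->
  bd_hemi d k p ->
  int_hemi d k q ->
  sdist d p q < PI / 2 ->
  (forall x, arc d p q x -> hemi d k x) ->
  arc_orth_at d p q k ->
  on_sphere d kperp ->
  bd_hemi d kperp q ->
  hemi d kperp p ->
  arc_orth_at d q p kperp ->
  is_lune d k kperp /\
  (exists t0, thickness_is d k kperp t0) /\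
  (forall m : vec, on_sphere d m -> bd_hemi d m q -> hemi d m p -> is_lune d k m ->
     forall t0 t, thickness_is d k kperp t0 -> thickness_is d k m t -> t0 <= t).
Proof.
  intros _ Hk Hp Hq Dpq _ Opq Hkperp Kq Kp Oqp.
  assert (Hpq : 0 < dot d p q)
    by (apply acos_lt_PI2; auto; apply unit_dot_bound; [apply Hp | apply Hq]).
  assert (Lperp : is_lune d k kperp).
  { apply is_lune_iff; rewrite (dot_k_kperp d k p q kperp) by auto.
    pose proof (dot_p_q_lt1 d k p q Hk Hp Hq Opq). repeat split; auto; lra. }
  split; [exact Lperp |]. split.
  - exists (acos (- dot d k kperp)). apply thickness_is_iff; auto.
  - intros m Hm Mq Mp Lm t0 t T0 T.
    apply thickness_is_iff in T0, T; auto. subst t0 t.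
    rewrite (dot_k_kperp d k p q kperp), Ropp_involutive by auto.
    pose proof (opp_dot_k_le d k p q kperp Hk Hp Hq Opq Hkperp Kq Kp Oqp m Hpq Hm Mq Mp).
    apply is_lune_iff in Lm as (_ & _ & Lm).
    apply acos_le_acos_iff; try lra.
    apply unit_dot_bound; [apply Hp | apply Hq].
Qed.
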